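(* Let $(Q,P)$ be a weakly quasi-lattice ordered group and let $\Lambda$ be a $P$-graph with $\mathrm{FA}(\Lambda)\neq\emptyset$. Suppose $\mu,\mu'\in\Lambda$ with $s(\mu)=r(\mu')$, $\mu\mu'\in\mathrm{FA}(\Lambda)$, and $(w_n)$ is a sequence converging to $w$ in $Z(\mu')$. Then there is a subsequence $(w_{n_k})$ such that $\mu\cdot w_{n_k}\to\mu\cdot w$ in $Z(\mu\mu')$.
   Context: $(Q,P)$ weakly quasi-lattice ordered: $Q$ a discrete group, $P\subseteq Q$ a subsemigroup containing the identity $e$ with $P\cap P^{-1}=\{e\}$, and, with $p\le r$ meaning $pq=r$ for some $q\in P$, any two elements of $P$ with a common upper bound have a least common upper bound. A $P$-graph is a countable small category $\Lambda$ (identities $\Lambda^{(0)}$, range/source $r,s$) with a functor $d:\Lambda\to P$ with unique factorisation (if $d(\lambda)=pq$ there are unique $\mu,\nu$ with $\lambda=\mu\nu$, $d(\mu)=p$, $d(\nu)=q$). Write $\lambda\Lambda=\{\lambda\mu: s(\lambda)=r(\mu)\}$, $\mu\preceq\lambda$ iff $\lambda\in\mu\Lambda$. $\mathrm{FA}(\Lambda)$ is the set of $\lambda$ such that for all $\mu\in\lambda\Lambda,\nu\in\Lambda$ there is finite $J\subseteq\Lambda$ with $\mu\Lambda\cap\nu\Lambda=\bigcup_{\kappa\in J}\kappa\Lambda$. A filter is a nonempty hereditary and directed subset of $\Lambda$ (w.r.t. $\preceq$); $\mathcal{F}(\Lambda)$ is the set of filters, topologised as a subspace of $\mathcal{P}(\Lambda)\cong\{0,1\}^\Lambda$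 with the product topology. For $\nu\in\Lambda$, $Z(\nu)=\{x\in\mathcal{F}(\Lambda):\nu\in x\}$ with the subspace topology. For a filter $w$ whose unique element of $\Lambda^{(0)}$ is $s(\mu)$, $\mu\cdot w=\{\zeta\in\Lambda:\zeta\preceq\mu\gamma\text{ for some }\gamma\in w\}$. *)

From HB Require Import structures.
From mathcomp Require Import all_boot all_order all_algebra.
From mathcomp Require Import all_classical all_reals all_analysis.
Set Implicit Arguments. Unset Strict Implicit. Unset Printing Implicit Defensive.
Local Open Scope classical_set_scope.

Definition is_group {Q : Type} (mul : Q -> Q -> Q) (e : Q) (inv : Q -> Q) : Prop :=
  (forall a b c, mul a (mul b c) = mul (mul a b) c) /\
  (forall a, mul e a = a) /\ (forall a, mul a e = a) /\
  (forall a, mul (inv a) a = e) /\ (forall a, mul a (inv a) = e).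

Definition Ple {Q : Type} (mul : Q -> Q -> Q) (P : Q -> Prop) (p r : Q) : Prop :=
  exists q, P q /\ mul p q = r.

Definition wqlo {Q : Type} (mul : Q -> Q -> Q) (e : Q) (inv : Q -> Q)
  (P : Q -> Prop) : Prop :=
  is_group mul e inv /\
  (forall p q, P p -> P q -> P (mul p q)) /\ P e /\
  (forall p, P p -> P (inv p) -> p = e) /\
  (forall p q, P p -> P q ->
     (exists u, P u /\ Ple mul P p u /\ Ple mul P q u) ->
     exists c, P c /\ Ple mul P p c /\ Ple mul P q c /\
       forall u, P u -> Ple mul P p u -> Ple mul P q u -> Ple mul P c u).

(* A small category: objects Obj (identified with the identity morphisms
   idm v, which form Lambda^(0)), morphisms Mor, range/source r s,
   composition cmp (only meaningful on composable pairs s a = r b),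
   degree functor d : Mor -> Q. *)
Record PGraph (Q : Type) := {
  Obj : Type;
  Mor : Type;
  rg : Mor -> Obj;
  src : Mor -> Obj;
  idm : Obj -> Mor;
  cmp : Mor -> Mor -> Mor;
  deg : Mor -> Q }.
Arguments Obj {Q} p.
Arguments Mor {Q} p.
Arguments rg {Q} p _.
Arguments src {Q} p _.
Arguments idm {Q} p _.
Arguments cmp {Q} p _ _.
Arguments deg {Q} p _.

Definition is_Pgraph {Q : Type} (mul : Q -> Q -> Q) (e : Q) (P : Q -> Prop)
  (G : PGraph Q) : Prop :=
  (forall v, rg G (idm G v) = v /\ src G (idm G v) = v) /\
  (forall a, cmp G (idm G (rg G a)) a = a /\ cmp G a (idm G (src G a)) = a) /\
  (forall a b, src G a = rg G b -> rg G (cmp G a b) = rg G a /\ src G (cmp G a b) = src G b) /\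
  (forall a b c, src G a = rg G b -> src G b = rg G c ->
     cmp G (cmp G a b) c = cmp G a (cmp G b c)) /\
  (exists f : Mor G -> nat, injective f) /\
  (exists f : Obj G -> nat, injective f) /\
  (forall a, P (deg G a)) /\
  (forall v, deg G (idm G v) = e) /\
  (forall a b, src G a = rg G b -> deg G (cmp G a b) = mul (deg G a) (deg G b)) /\
  (forall l p q, P p -> P q -> deg G l = mul p q ->
     (exists m n, src G m = rg G n /\ l = cmp G m n /\ deg G m = p /\ deg G n = q) /\
     (forall m n m' n',
        src G m = rg G n -> l = cmp G m n -> deg G m = p -> deg G n = q ->
        src G m' = rg G n' -> l = cmp G m' n' -> deg G m' = p -> deg G n' = q ->
        m = m' /\ n = n')).

Section PGraphNotions.
Variables (Q : Type) (G : PGraph Q).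

Definition ext (l : Mor G) : set (Mor G) :=
  [set z | exists n, src G l = rg G n /\ z = cmp G l n].

Definition preceq (m l : Mor G) : Prop := ext m l.

Definition FA (l : Mor G) : Prop :=
  forall m n, ext l m ->
    exists (k : nat) (J : nat -> Mor G),
      forall z, (ext m z /\ ext n z) <-> (exists i, (i < k)%N /\ ext (J i) z).

(* subsets of Lambda, i.e. points of {0,1}^Lambda with the product topology *)
Definition PL := {ptws Mor G -> bool}.

Definition is_filter (x : Mor G -> bool) : Prop :=
  (exists l, x l) /\
  (forall m l, preceq m l -> x l -> x m) /\
  (forall l m, x l -> x m -> exists n, x n /\ preceq l n /\ preceq m n).

(* Z(nu) as a subset of P(Lambda) (its topology is the subspace topology) *)
Definition Zset (nu : Mor G) : set PL := [set x | is_filter x /\ x nu].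

Definition dot (mu : Mor G) (w : Mor G -> bool) : PL :=
  fun z => `[< exists g, w g /\ src G mu = rg G g /\ preceq z (cmp G mu g) >].

End PGraphNotions.
Arguments ext {Q} G _ _.
Arguments preceq {Q} G _ _.
Arguments FA {Q} G _.
Arguments PL {Q} G.
Arguments is_filter {Q} G _.
Arguments Zset {Q} G _ _.
Arguments dot {Q} G _ _ _.

From HB Require Import structures.
From mathcomp Require Import all_boot all_order all_algebra.
From mathcomp Require Import all_classical all_reals all_analysis.
Local Open Scope classical_set_scope.
Set Implicit Arguments. Unset Strict Implicit.

(* Fix t in Lambda. By FA(mu mu'), mu mu' Lambda ∩ t Lambda is a finite union
   of sets J_i Lambda with J_i = mu a_i, and for every filter x containing mu'
   we get t ∈ mu.x iff x contains some a_i: directedness of x moves a witness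
   above mu', then left cancellation and hereditarity bring it down to a_i.
   Convergence in {0,1}^Lambda is eventual agreement at each coordinate, and
   finitely many coordinates agree eventually, so mu.w_n --> mu.w along the
   whole sequence: the subsequence is the identity. *)

Lemma eval_bool_cvgP (T : Type) (t : T) (F : set_system (T -> bool))
    (f : T -> bool) :
  Filter F -> F --> (f : initial_topology (fun g : T -> bool => g t)) <->
  \forall g \near F, g t = f t.
Proof.
move=> FF; have eval_surj : [set g t | g in [set: T -> bool]] = [set: bool].
  by apply/seteqP; split => // b _; exists (fun=> b).
rewrite cvg_image //; split => [cvgFt | nearFt B Bft].
- have [A FA At] := cvgFt _ (discrete_set1 (f t)).
  by apply: filterS FA => g Ag; rewrite -[_ = _]/([set f t] (g t)) -At; exists g.
- exists [set g | B (g t)].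
    by apply: filterS nearFt => g /= ->; exact: nbhs_singleton.
  by apply/seteqP; split => [b [g Bg <-] | b Bb] //; exists (fun=> b).
Qed.

Lemma ptws_bool_cvgP (T : Type) (F : set_system {ptws T -> bool})
    (f : {ptws T -> bool}) :
  Filter F -> F --> f <-> forall t, \forall g \near F, g t = f t.
Proof.
move=> FF; rewrite cvg_sup.
by split => H t; [apply/eval_bool_cvgP; exact: H | apply/eval_bool_cvgP].
Qed.

Lemma cvg_within_nbhs (T : topologicalType) (A : set T) (F : set_system T)
    (x : T) :
  Filter F -> F A -> F --> x -> F --> within A (nbhs x).
Proof.
by move=> FF FA Fx B /Fx; apply: filterS2 FA => y Ay; apply.
Qed.

Section PGraphFacts.
Variables (Q : Type) (mul : Q -> Q -> Q) (e : Q) (inv : Q -> Q) (P : Q -> Prop).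
Variable G : PGraph Q.
Hypothesis HG : is_Pgraph mul e P G.

Local Notation rg := (rg G).
Local Notation src := (src G).
Local Notation cmp := (cmp G).
Local Notation deg := (deg G).
Local Notation preceq := (preceq G).

Let cmp_rg_src a b : src a = rg b -> rg (cmp a b) = rg a /\ src (cmp a b) = src b.
Proof. exact: HG.2.2.1. Qed.

Let cmpA a b c : src a = rg b -> src b = rg c -> cmp (cmp a b) c = cmp a (cmp b c).
Proof. exact: HG.2.2.2.1. Qed.

Lemma preceq_refl l : preceq l l.
Proof.
exists (idm G (src l)); split; first by case: (HG.1 (src l)).
by case: (HG.2.1 l).
Qed.

Lemma preceq_trans a b c : preceq a b -> preceq b c -> preceq a c.
Proof.
move=> [n [an ->]] [n' [bn' ->]]; have [_ src_an] := cmp_rg_src an.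
rewrite src_an in bn'; exists (cmp n n'); split; last by rewrite cmpA.
by rewrite an; case: (cmp_rg_src bn').
Qed.

Lemma preceq_rg a b : preceq a b -> rg b = rg a.
Proof. by move=> [n [an ->]]; case: (cmp_rg_src an). Qed.

Lemma preceq_cmp2l mu a b :
  src mu = rg a -> preceq a b -> preceq (cmp mu a) (cmp mu b).
Proof.
move=> mua [n [an ->]]; exists n; split; last by rewrite cmpA.
by case: (cmp_rg_src mua) => _ ->.
Qed.

Hypothesis HQ : is_group mul e inv.

Lemma cmpI mu a b :
  src mu = rg a -> src mu = rg b -> cmp mu a = cmp mu b -> a = b.
Proof.
have [mulA [mul1q [_ [mulVq _]]]] := HQ.
have [deg_P [_ [deg_cmp unique_fact]]] := HG.2.2.2.2.2.2.
move=> mua mub mua_b.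
have deg_ab : deg a = deg b.
  have := deg_cmp _ _ mua; rewrite mua_b deg_cmp //.
  move=> /(f_equal (mul (inv (deg mu)))).
  by rewrite !mulA mulVq !mul1q.
have [_ uniq] := unique_fact (cmp mu a) _ _ (deg_P mu) (deg_P a) (deg_cmp _ _ mua).
by have [_ ->] := uniq mu a mu b mua erefl erefl erefl mub mua_b erefl (esym deg_ab).
Qed.

Lemma preceq_cmplP mu a z : src mu = rg a -> preceq (cmp mu a) z ->
  exists b, [/\ src mu = rg b, z = cmp mu b & preceq a b].
Proof.
move=> mua [n [mua_n ->]]; have [_ src_mua] := cmp_rg_src mua.
rewrite src_mua in mua_n; exists (cmp a n); split; last by exists n.
- by case: (cmp_rg_src mua_n) => ->.
- by rewrite cmpA.
Qed.

Lemma preceq_cmp2lE mu a b : src mu = rg a -> src mu = rg b ->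
  preceq (cmp mu a) (cmp mu b) <-> preceq a b.
Proof.
move=> mua mub; split; last exact: preceq_cmp2l.
by move=> /(preceq_cmplP mua) [c [muc /(cmpI mub muc) -> ac]].
Qed.

End PGraphFacts.

Section Dot.
Variables (Q : Type) (mul : Q -> Q -> Q) (e : Q) (inv : Q -> Q) (P : Q -> Prop).
Variable G : PGraph Q.
Hypotheses (HQ : is_group mul e inv) (HG : is_Pgraph mul e P G).
Variables (mu mu' : Mor G).
Hypothesis mu_mu' : src G mu = rg G mu'.

Local Notation rg := (rg G).
Local Notation src := (src G).
Local Notation cmp := (cmp G).
Local Notation preceq := (preceq G).
Local Notation dot := (dot G).
Local Notation Zset := (Zset G).

Lemma dotP (x : Mor G -> bool) z :
  reflect (exists g, x g /\ src mu = rg g /\ preceq z (cmp mu g)) (dot mu x z).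
Proof. exact: asboolP. Qed.

Lemma dot_Zset x : Zset mu' x -> Zset (cmp mu mu') (dot mu x).
Proof.
move=> [[_ [_ x_dir]] x_mu'].
have dot_mu : dot mu x (cmp mu mu').
  by apply/dotP; exists mu'; split => //; split => //; exact: (preceq_refl HG _).
split=> //; split; first by exists (cmp mu mu').
split.
  move=> m l ml /dotP [g [xg [mug lg]]].
  by apply/dotP; exists g; split=> //; split=> //; exact: (preceq_trans HG ml lg).
move=> l m /dotP [g1 [xg1 [mug1 lg1]]] /dotP [g2 [xg2 [mug2 mg2]]].
have [n [xn [g1n g2n]]] := x_dir _ _ xg1 xg2.
have mun : src mu = rg n by rewrite (preceq_rg HG g1n).
exists (cmp mu n); split.
  by apply/dotP; exists n; split=> //; split=> //; exact: (preceq_refl HG _).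
split; first exact: (preceq_trans HG lg1 (preceq_cmp2l HG mug1 g1n)).
exact: (preceq_trans HG mg2 (preceq_cmp2l HG mug2 g2n)).
Qed.

Hypothesis FA_mu_mu' : FA G (cmp mu mu').

Lemma dot_mem_finite t : exists (k : nat) (a : nat -> Mor G),
  forall x, Zset mu' x -> dot mu x t = [exists i : 'I_k, x (a i)].
Proof.
have [k [J J_cover]] := FA_mu_mu' t (preceq_refl HG _).
have J_cover_self i : (i < k)%N -> preceq (cmp mu mu') (J i) /\ preceq t (J i).
  by move=> ik; apply/J_cover; exists i; split=> //; exact: (preceq_refl HG _).
have [a Ja] : {a : nat -> Mor G &
    forall i, (i < k)%N -> src mu = rg (a i) /\ J i = cmp mu (a i)}.
  apply: (@choice _ _ (fun i b => (i < k)%N -> src mu = rg b /\ J i = cmp mu b)).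
  move=> i; have [ik | _] := ltnP i k; last by exists mu.
  by have [b [mub -> _]] := preceq_cmplP HG mu_mu' (J_cover_self i ik).1; exists b.
exists k, a => x [[_ [x_hered x_dir]] x_mu'].
apply/dotP/existsP => [[g [xg [mug tg]]] | [[i ik] xai]].
- have [h [xh [gh mu'h]]] := x_dir _ _ xg x_mu'.
  have muh : src mu = rg h by rewrite (preceq_rg HG gh).
  have [i [ik Ji_muh]] := (J_cover (cmp mu h)).1
    (conj (preceq_cmp2l HG mu_mu' mu'h) (preceq_trans HG tg (preceq_cmp2l HG mug gh))).
  have [mua Ja_eq] := Ja i ik; rewrite Ja_eq in Ji_muh.
  exists (Ordinal ik).
  exact: x_hered ((preceq_cmp2lE HG HQ mua muh).1 Ji_muh) xh.
- have [mua Ja_eq] := Ja i ik.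
  exists (a i); split=> //; split=> //.
  by rewrite -Ja_eq; exact: (J_cover_self i ik).2.
Qed.

Lemma cvg_dot (I : Type) (F : set_system I) (x : I -> PL G) (x0 : PL G) :
  Filter F -> (\forall i \near F, Zset mu' (x i)) -> Zset mu' x0 ->
  x @ F --> x0 -> (fun i => dot mu (x i)) @ F --> dot mu x0.
Proof.
move=> FF Zx Z_x0 /(ptws_bool_cvgP _ _) cvg_pt; apply/ptws_bool_cvgP => t.
have [k [a dotE]] := dot_mem_finite t.
have near_a : \forall i \near F, forall j : 'I_k, x i (a j) = x0 (a j).
  by apply: filter_forall => j; exact: cvg_pt.
apply: filterS2 Zx near_a => i Z_xi xa_eq /=.
by rewrite !dotE //; apply: eq_existsb => j; rewrite xa_eq.
Qed.
End Dot.

Theorem lemma5p13 (Q : Type) (mul : Q -> Q -> Q) (e : Q) (inv : Q -> Q)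
  (P : Q -> Prop) (G : PGraph Q)
  (HQ : wqlo mul e inv P) (HG : is_Pgraph mul e P G)
  (HFA : exists l, FA G l)
  (mu mu' : Mor G) (Hc : src G mu = rg G mu') (HFAm : FA G (cmp G mu mu'))
  (w : nat -> subspace (Zset G mu')) (w0 : subspace (Zset G mu'))
  (Hw : forall n, Zset G mu' (w n)) (Hw0 : Zset G mu' w0)
  (Hconv : w @ \oo --> w0) :
  exists phi : nat -> nat, (forall k, (phi k < phi k.+1)%N) /\
    ((fun k => (dot G mu (w (phi k)) : subspace (Zset G (cmp G mu mu')))) @ \oo
       --> (dot G mu w0 : subspace (Zset G (cmp G mu mu')))).
Proof.
exists id; split => //.
have cvg_w : w @ \oo --> (w0 : PL G).
  apply: cvg_trans (cvg_within (Zset G mu')).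
  exact/(subspace_cvgP (A := Zset G mu') _ Hw0).
apply/(subspace_cvgP (A := Zset G (cmp G mu mu')) _ (dot_Zset HG Hc Hw0)).
apply: cvg_within_nbhs.
  exact: filterE _ (fun n => dot_Zset HG Hc (Hw n)).
exact: (cvg_dot HQ.1 HG Hc HFAm _ (filterE _ Hw) Hw0 cvg_w).
Qed.
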